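(* Let $(L,\wedge,\vee,0,1)$ be a bounded lattice with multiplicative Nakano mosaic $(L,\boxdot,1)$, where $x\boxdot y:=\{z\in L\mid x\wedge y=x\wedge z=z\wedge y\}$. For $x,y,z\in L$, we have $z=x\wedge y$ if and only if $x,y\in z\boxdot z$ and $z\in x\boxdot y$. *)

From HB Require Import structures.
From mathcomp Require Import all_boot all_order.
Set Implicit Arguments. Unset Strict Implicit. Unset Printing Implicit Defensive.
Import Order.TTheory.
Local Open Scope order_scope.

Definition nakano_mul (d : Order.disp_t) (L : latticeType d) (x y : L) : pred L :=
  fun z => (x `&` y == x `&` z) && (x `&` z == z `&` y).

From mathcomp Require Import all_boot all_order.
Local Open Scope order_scope.
Import Order.TTheory.

(* The diagonal [z ⊡ z] is the principal filter of [z], so the first two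
   conditions say [z <= x] and [z <= y]; membership [z ∈ x ⊡ y] forces
   [x ∧ y = x ∧ z], which is [z] once [z <= x], and conversely [x ∧ y ∈ x ⊡ y]. *)

Section NakanoMul.

Variables (d : Order.disp_t) (L : latticeType d).
Implicit Types x y z : L.

Lemma nakano_mulP x y z :
  reflect (x `&` y = x `&` z /\ x `&` z = z `&` y) (z \in nakano_mul x y).
Proof. by rewrite unfold_in /nakano_mul /=; apply: (iffP andP) => -[/eqP-> /eqP->]. Qed.

Lemma nakano_mul_diag x z : (x \in nakano_mul z z) = (z <= x).
Proof.
apply/nakano_mulP/idP => [[+ _]|/meet_idPl zx]; first by rewrite meetxx => /esym/meet_idPl.
by rewrite meetxx zx meetC zx.
Qed.

Lemma meet_in_nakano_mul x y : x `&` y \in nakano_mul x y.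
Proof.
apply/nakano_mulP; rewrite meetA meetxx; split=> //.
by rewrite -meetA meetxx.
Qed.

Lemma nakano_mul_meet x y z : z \in nakano_mul x y -> x `&` y = x `&` z.
Proof. by case/nakano_mulP. Qed.

End NakanoMul.

Theorem mainTheorem18 (d : Order.disp_t) (L : tbLatticeType d) (x y z : L) :
  z = x `&` y <->
  [/\ x \in nakano_mul z z, y \in nakano_mul z z & z \in nakano_mul x y].
Proof.
rewrite !nakano_mul_diag; split=> [->|[zx _ /nakano_mul_meet->]].
  by rewrite leIl leIr meet_in_nakano_mul.
by apply/esym/meet_idPr.
Qed.
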